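(* In the setting described in the context (with $Q$ possibly infinite-dimensional and $\Omega$ admissible), for $\tau\in L$ let $k^{\mathrm{S}}_\tau:Q\to\mathbb{C}$ be $$k^{\mathrm{S}}_\tau(\phi)=\exp\Big(\Omega(q(\tau),\phi)+\mathrm{i}[\tau,\phi]-\tfrac12\Omega(q(\tau),q(\tau))-\tfrac{\mathrm{i}}{2}[\tau,\tau]\Big),$$ and regard it (by its canonical extension) as a continuous function on $\hat{Q}$. Then the linear span of $\{k^{\mathrm{S}}_\tau:\tau\in L\}$ is dense in $\mathrm{L}^2(\hat{Q},\nu_Q)$.
   Context: $L$ is a real vector space and $[\cdot,\cdot]:L\times L\to\mathbb{R}$ is bilinear such that $\omega(\xi,\xi')=\frac12[\xi,\xi']-\frac12[\xi',\xi]$ is non-degenerate. $M=\{\tau\in L:[\xi,\tau]=0\ \forall\xi\in L\}$, $N=\{\tau\in L:[\tau,\xi]=0\ \forall\xi\in L\}$, and $L=M\oplus N$ is assumed. $Q=L/M$ with quotient map $q$; $[\cdot,\cdot]$ descends to $L\times Q\to\mathbb{R}$. $\Omega:Q\times Q\to\mathbb{C}$ is a symmetric bilinear form with positive definite real part which is admissible: $Q$ with inner product $\Re\Omega$ is a separable real Hilbert space, $\Im\Omega$ is continuous, for every $\xi\in L$ the map $\phi\mapsto[\xi,\phi]$ is continuous on $Q$, and every continuous linear map $Q\to\mathbb{R}$ is of the form $\phi\mapsto[\xi,\phi]$ for some $\xi\in L$. $\hat{Q}$ denotes the algebraic dual of the topological dual $Q^*$ of $Q$, with the canonical inclusion $Q\hookrightarrow\hat{Q}$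 and the initial topology making all evaluations $\hat{Q}\ni x\mapsto x(\ell)$, $\ell\in Q^*$, continuous. $\nu_Q$ is the Gaussian probability measure on $\hat{Q}$ determined by $\int_{\hat{Q}}\exp(\mathrm{i}\,x(\ell))\,\mathrm{d}\nu_Q(x)=\exp(-\frac14\|\ell\|^2)$ for all $\ell\in Q^*$ (equivalently, its pushforward to every finite-dimensional quotient of $Q$ is the Gaussian measure with density proportional to $\exp(-\Re\Omega(\phi,\phi))$ in the quotient norm). A continuous function on $Q$ that is invariant under translations by a closed subspace $W$ of finite codimension factors through the finite-dimensional space $Q/W$, which is also a quotient of $\hat{Q}$; this gives its canonical extension to a continuous function on $\hat{Q}$. Each $k^{\mathrm{S}}_\tau$ is of this type. *)

From HB Require Import structures.
From mathcomp Require Import all_boot all_order all_algebra.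
From mathcomp Require Import all_classical all_reals all_analysis.
Set Implicit Arguments. Unset Strict Implicit. Unset Printing Implicit Defensive.
Import Order.TTheory GRing.Theory Num.Theory.
Local Open Scope classical_set_scope.
Local Open Scope ring_scope.

Section Defs.
Variable R : realType.

Definition bilinear_form (V : lmodType R) (B : V -> V -> R) : Prop :=
  (forall a x y z, B (a *: x + y) z = a * B x z + B y z) /\
  (forall a x y z, B z (a *: x + y) = a * B z x + B z y).

Variable Q : lmodType R.
Variable OmR : Q -> Q -> R.   (* real part of Omega: the inner product on Q *)

Definition qnorm (phi : Q) : R := Num.sqrt (OmR phi phi).

Definition Qcont (l : Q -> R) : Prop :=
  forall phi0 (e : R), 0 < e -> exists2 d : R, 0 < d &
    forall phi, qnorm (phi - phi0) < d -> `|l phi - l phi0| < e.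

Definition Qcont2 (B : Q -> Q -> R) : Prop :=
  forall phi0 psi0 (e : R), 0 < e -> exists2 d : R, 0 < d &
    forall phi psi, qnorm (phi - phi0) < d -> qnorm (psi - psi0) < d ->
      `|B phi psi - B phi0 psi0| < e.

Definition Q_complete : Prop :=
  forall u : nat -> Q,
    (forall e : R, 0 < e -> exists N, forall m n, (N <= m)%N -> (N <= n)%N ->
        qnorm (u m - u n) < e) ->
    exists phi, forall e : R, 0 < e -> exists N, forall n, (N <= n)%N ->
        qnorm (u n - phi) < e.

Definition Q_separable : Prop :=
  exists d : nat -> Q, forall phi (e : R), 0 < e -> exists n, qnorm (phi - d n) < e.

Definition is_Qstar (l : Q -> R) : Prop :=
  (forall a x y, l (a *: x + y) = a * l x + l y) /\ Qcont l.

Definition dual_norm (l : Q -> R) : R :=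
  sup ((fun phi => `|l phi|) @` [set phi | OmR phi phi <= 1]).

(* Qhat = algebraic dual of Qstar.  An element is represented by its values on
   all functions Q -> R, required to be linear on Qstar and 0 outside Qstar
   (so this type is in bijection with the algebraic dual of Qstar). *)
Record Qhat := MkQhat {
  qh : (Q -> R) -> R ;
  qh_out : forall l, ~ is_Qstar l -> qh l = 0 ;
  qh_lin : forall (a : R) l m, is_Qstar l -> is_Qstar m ->
     qh (fun phi => a * l phi + m phi) = a * qh l + qh m }.

Definition Qhat0 : Qhat.
Proof. by exists (fun _ => 0) => // a l m _ _; rewrite mulr0 addr0. Defined.

HB.instance Definition _ := gen_eqMixin Qhat.
HB.instance Definition _ := gen_choiceMixin Qhat.
HB.instance Definition _ := isPointed.Build Qhat Qhat0.

Definition cylinders : set (set Qhat) :=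
  [set A | exists l : Q -> R, is_Qstar l /\ exists B : set R,
     measurable B /\ A = (fun x : Qhat => qh x l) @^-1` B].

Definition QhatM := g_sigma_algebraType cylinders.

End Defs.

Section Coherent.
Variables (R : realType) (L Q : lmodType R).
Variables (br : L -> L -> R) (q : L -> Q) (bQ : L -> Q -> R).
Variables (OmR OmI : Q -> Q -> R).

(* the exponent of k^S_tau, evaluated on x in Qhat via the canonical
   extension: the continuous linear functionals phi |-> Omega(q tau, phi)
   and phi |-> [tau, phi] are replaced by evaluation of x at them. *)
Definition kS_arg_re (tau : L) (x : Qhat OmR) : R :=
  qh x (fun phi => OmR (q tau) phi) - OmR (q tau) (q tau) / 2.
Definition kS_arg_im (tau : L) (x : Qhat OmR) : R :=
  qh x (fun phi => OmI (q tau) phi + bQ tau phi)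
  - OmI (q tau) (q tau) / 2 - br tau tau / 2.

(* real and imaginary parts of k^S_tau = exp(re + i im) on Qhat *)
Definition kS_re (tau : L) (x : Qhat OmR) : R :=
  expR (kS_arg_re tau x) * cos (kS_arg_im tau x).
Definition kS_im (tau : L) (x : Qhat OmR) : R :=
  expR (kS_arg_re tau x) * sin (kS_arg_im tau x).

(* real / imaginary part of the finite combination sum_j (a_j + i b_j) k^S_{tau_j} *)
Definition span_re n (tau : 'I_n -> L) (a b : 'I_n -> R) (x : Qhat OmR) : R :=
  \sum_(j < n) (a j * kS_re (tau j) x - b j * kS_im (tau j) x).
Definition span_im n (tau : 'I_n -> L) (a b : 'I_n -> R) (x : Qhat OmR) : R :=
  \sum_(j < n) (a j * kS_im (tau j) x + b j * kS_re (tau j) x).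
End Coherent.
Arguments kS_arg_re {R L Q} q OmR tau x.
Arguments kS_arg_im {R L Q} br q bQ OmR OmI tau x.
Arguments kS_re {R L Q} br q bQ OmR OmI tau x.
Arguments kS_im {R L Q} br q bQ OmR OmI tau x.
Arguments span_re {R L Q} br q bQ OmR OmI {n} tau a b x.
Arguments span_im {R L Q} br q bQ OmR OmI {n} tau a b x.

(* For tau in M one has q tau = 0 and [tau, tau] = 0, so k^S_tau = exp(i x(l)) with
   l = [tau, .]; as [n, .] = 0 for n in N, every l in Q* arises this way.
   Functions that are L^2-limits of trigonometric polynomials are stable under sums,
   products by bounded factors, dominated limits and, through a polynomial iteration for
   the square root, absolute values of bounded ones. Hence the sets with approximable
   indicator form a sigma-algebra; it contains the sets
   {c < x(l)} = U_m N_n {0 < sin ((x(l) - c) / (m + n + 1))}, so every measurable set,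
   and approximation by simple functions concludes. *)

From HB Require Import structures.
From mathcomp Require Import all_boot all_order all_algebra.
From mathcomp Require Import all_classical all_reals all_analysis.
From mathcomp Require Import ring lra measurable_realfun.
Set Implicit Arguments. Unset Strict Implicit. Unset Printing Implicit Defensive.
Import Order.TTheory GRing.Theory Num.Theory.
Import numFieldNormedType.Exports HBNNSimple.
Local Open Scope classical_set_scope.
Local Open Scope ring_scope.

Section Evaluation.
Variables (R : realType) (Q : lmodType R) (OmR : Q -> Q -> R).
Local Notation Qstar := (is_Qstar OmR).

Lemma is_Qstar0 : Qstar (fun _ => 0).
Proof.
split=> [a x y|phi0 e e0]; first by rewrite mulr0 addr0.
by exists 1 => // phi _; rewrite subrr normr0.
Qed.

Lemma is_QstarDZ (a : R) l m : Qstar l -> Qstar m ->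
  Qstar (fun phi => a * l phi + m phi).
Proof.
move=> [llin lcont] [mlin mcont]; split=> [b x y|phi0 e e0].
  by rewrite llin mlin; ring.
have ea_gt0 : 0 < e / 2 / (`|a| + 1) by rewrite !divr_gt0 // ltr_wpDl.
have [d1 d1_gt0 Hl] := lcont phi0 _ ea_gt0.
have [d2 d2_gt0 Hm] := mcont phi0 (e / 2) (divr_gt0 e0 (ltr0n _ 2)).
exists (Num.min d1 d2) => [|phi]; first by rewrite lt_min d1_gt0 d2_gt0.
rewrite lt_min => /andP[/Hl {}Hl /Hm {}Hm].
rewrite (_ : _ - _ = a * (l phi - l phi0) + (m phi - m phi0)); last by ring.
rewrite (le_lt_trans (ler_normD _ _)) // normrM [e]splitr ltr_leD ?ltW //.
have a1_gt0 : 0 < `|a| + 1 by rewrite ltr_wpDl.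
apply: (@le_lt_trans _ _ ((`|a| + 1) * `|l phi - l phi0|)).
  by rewrite ler_wpM2r // lerDl.
by rewrite -ltr_pdivlMl // mulrC.
Qed.

Lemma is_QstarZ (a : R) l : Qstar l -> Qstar (fun phi => a * l phi).
Proof.
move=> Ql; have := is_QstarDZ a Ql is_Qstar0.
by under eq_fun do rewrite addr0.
Qed.

Lemma qh0 (x : Qhat OmR) : qh x (fun _ => 0) = 0.
Proof.
have := qh_lin x 1 is_Qstar0 is_Qstar0.
under eq_fun do rewrite mulr0 addr0.
by rewrite mul1r => /eqP; rewrite -subr_eq subrr eq_sym => /eqP.
Qed.

Lemma qhZ (x : Qhat OmR) a l : Qstar l -> qh x (fun phi => a * l phi) = a * qh x l.
Proof.
move=> Ql; have := qh_lin x a Ql is_Qstar0.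
by rewrite qh0 addr0; under eq_fun do rewrite addr0.
Qed.

Lemma measurable_qh l : Qstar l -> measurable_fun setT (fun x : QhatM OmR => qh x l).
Proof.
move=> Ql _ B mB; rewrite setTI; apply: sub_gen_smallest.
by exists l; split => //; exists B.
Qed.

End Evaluation.

Section TrigonometricPolynomials.
Variables (R : realType) (Q : lmodType R) (OmR : Q -> Q -> R).
Local Notation T := (QhatM OmR).
Local Notation Qstar := (is_Qstar OmR).

Definition trig_term (t : (Q -> R) * (R * R)) (x : T) : R :=
  t.2.1 * cos (qh x t.1) + t.2.2 * sin (qh x t.1).

Definition trig_sum (s : seq ((Q -> R) * (R * R))) (x : T) : R :=
  \sum_(t <- s) trig_term t x.

Definition trig_poly (f : T -> R) : Prop :=
  exists2 s, List.Forall (fun t => Qstar t.1) s & f =1 trig_sum s.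

Lemma eq_trig_poly f g : f =1 g -> trig_poly g -> trig_poly f.
Proof. by move=> fg [s Qs gs]; exists s => // x; rewrite fg gs. Qed.

Lemma trig_poly_term l a b : Qstar l ->
  trig_poly (fun x => a * cos (qh x l) + b * sin (qh x l)).
Proof. by exists [:: (l, (a, b))] => [|x]; [constructor | rewrite /trig_sum big_seq1]. Qed.

Lemma trig_poly_cst c : trig_poly (fun _ => c).
Proof.
apply: eq_trig_poly (trig_poly_term c 0 (is_Qstar0 OmR)) => x.
by rewrite qh0 cos0 sin0 mulr1 mul0r addr0.
Qed.

Lemma trig_polyD f g : trig_poly f -> trig_poly g -> trig_poly (f \+ g).
Proof.
move=> [s Qs fs] [s' Qs' gs']; exists (s ++ s'); first exact/List.Forall_app.
by move=> x; rewrite /trig_sum big_cat /= fs gs'.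
Qed.

Lemma trig_poly_sum (I : Type) (r : seq I) (F : I -> T -> R) :
  (forall i, List.In i r -> trig_poly (F i)) ->
  trig_poly (fun x => \sum_(i <- r) F i x).
Proof.
elim: r => [_|i r IHr Fr].
  by apply: eq_trig_poly (trig_poly_cst 0) => x; rewrite big_nil.
apply: eq_trig_poly (trig_polyD (Fr i (or_introl erefl))
                                (IHr (fun j rj => Fr j (or_intror rj)))).
by move=> x; rewrite big_cons.
Qed.

Lemma trig_poly_sinB l c : Qstar l -> trig_poly (fun x => sin (qh x l - c)).
Proof.
move=> Ql; apply: eq_trig_poly (trig_poly_term (- sin c) (cos c) Ql) => x.
by rewrite sinB; ring.
Qed.

Lemma trig_poly_termM t u : Qstar t.1 -> Qstar u.1 ->
  trig_poly (fun x => trig_term t x * trig_term u x).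
Proof.
case: t u => [l [a b]] [m [c d]] /= Ql Qm.
have Qlm := is_QstarDZ 1 Ql Qm; have Qml := is_QstarDZ (-1) Qm Ql.
apply: eq_trig_poly (trig_polyD
  (trig_poly_term ((a * c - b * d) / 2) ((a * d + b * c) / 2) Qlm)
  (trig_poly_term ((a * c + b * d) / 2) ((b * c - a * d) / 2) Qml)) => x.
rewrite /= !qh_lin // /trig_term /= !mul1r !mulN1r.
rewrite cosD sinD [- _ + _]addrC cosB sinB.
by field.
Qed.

Lemma trig_polyM f g : trig_poly f -> trig_poly g -> trig_poly (f \* g).
Proof.
move=> [s Qs fs] [s' Qs' gs'].
apply: eq_trig_poly (@trig_poly_sum _ s
  (fun t x => \sum_(u <- s') trig_term t x * trig_term u x) _) => [x|t st].
  rewrite /= fs gs' /trig_sum mulr_suml; apply: eq_bigr => t _; exact: mulr_sumr.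
apply: trig_poly_sum => u s'u; apply: trig_poly_termM.
  by move/List.Forall_forall: Qs; apply.
by move/List.Forall_forall: Qs'; apply.
Qed.

Lemma measurable_trig_poly f : trig_poly f -> measurable_fun setT f.
Proof.
move=> [s Qs /funext ->]; elim: s Qs => [_|t s IHs /List.Forall_cons_iff [Qt Qs]].
  by rewrite /trig_sum; under eq_fun do rewrite big_nil; exact: measurable_cst.
rewrite /trig_sum; under eq_fun do rewrite big_cons.
apply: measurable_funD (IHs Qs).
apply: measurable_funD; apply: measurable_funM (measurable_cst _) _;
  apply: measurableT_comp (measurable_qh Qt).
- exact: continuous_measurable_fun (@continuous_cos R).
- exact: continuous_measurable_fun (@continuous_sin R).
Qed.

Lemma trig_poly_bounded f : trig_poly f -> exists M, forall x, `|f x| <= M.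
Proof.
move=> [s _ fs]; exists (\sum_(t <- s) (`|t.2.1| + `|t.2.2|)) => x.
rewrite fs /trig_sum (le_trans (ler_norm_sum _ _ _)) // ler_sum // => t _.
by rewrite (le_trans (ler_normD _ _)) // lerD // normrM ler_piMr //
  ?cos_max ?sin_max.
Qed.

End TrigonometricPolynomials.

Lemma normr_max0_le (R : realDomainType) (u : R) : `|Num.max u 0| <= `|u|.
Proof. by rewrite ger0_norm ?le_max ?lexx ?orbT // ge_max normr_ge0 ler_norm. Qed.

Lemma sqrD_le (R : realDomainType) (u v : R) : (u + v) ^+ 2 <= 2 * u ^+ 2 + 2 * v ^+ 2.
Proof. by rewrite -subr_ge0 (_ : _ - _ = (u - v) ^+ 2) ?sqr_ge0 //; ring. Qed.

Lemma sqrM_le (R : realDomainType) (a b M : R) :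
  `|a| <= M -> (a * b) ^+ 2 <= M ^+ 2 * b ^+ 2.
Proof.
move=> aM; have a_ge0 := normr_ge0 a.
by rewrite exprMn -(real_normK (num_real a)) ler_wpM2r ?sqr_ge0 //; nra.
Qed.

Lemma sqrB_le_bound (R : realFieldType) (u v G : R) :
  `|u| <= G -> `|v| <= G -> (u - v) ^+ 2 <= 4 * G ^+ 2.
Proof.
move=> /(sqrM_le 1) uG /(sqrM_le 1) vG; rewrite !mulr1 expr1n in uG vG.
by have := sqrD_le u (- v); rewrite sqrrN; lra.
Qed.

Section Approximation.
Variables (R : realType) (Q : lmodType R) (OmR : Q -> Q -> R).
Local Notation T := (QhatM OmR).
Variable P : probability T R.

Lemma integral_lt_sqr_comb (F h1 h2 : T -> R) (c1 c2 e1 e2 e : R) :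
  measurable_fun setT F -> (forall x, 0 <= F x) ->
  measurable_fun setT h1 -> measurable_fun setT h2 ->
  0 < c1 -> 0 < c2 -> (forall x, F x <= c1 * h1 x ^+ 2 + c2 * h2 x ^+ 2) ->
  (\int[P]_x (h1 x ^+ 2)%:E < e1%:E)%E -> (\int[P]_x (h2 x ^+ 2)%:E < e2%:E)%E ->
  c1 * e1 + c2 * e2 <= e -> (\int[P]_x (F x)%:E < e%:E)%E.
Proof.
move=> mF F_ge0 mh1 mh2 c1_gt0 c2_gt0 Fle.
have msqr (k : T -> R) : measurable_fun setT k ->
    measurable_fun setT (fun x => (k x ^+ 2)%:E).
  by move=> mk; apply/measurable_EFinP/measurable_funX.
have sqr_ge0E (k : T -> R) x : setT x -> (0 <= (k x ^+ 2)%:E)%E.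
  by rewrite lee_fin sqr_ge0.
have IF_le : (\int[P]_x (F x)%:E <=
    c1%:E * \int[P]_x (h1 x ^+ 2)%:E + c2%:E * \int[P]_x (h2 x ^+ 2)%:E)%E.
  have mcsqr (k : T -> R) c : measurable_fun setT k ->
      measurable_fun setT (fun x => (c * k x ^+ 2)%:E).
    by move=> mk; apply/measurable_EFinP/measurable_funM/measurable_funX.
  apply: (@le_trans _ _ (\int[P]_x ((c1 * h1 x ^+ 2)%:E + (c2 * h2 x ^+ 2)%:E))%E).
    apply: ge0_le_integral => //;
      [by move=> x _; rewrite lee_fin | exact/measurable_EFinP | |].
      by apply: emeasurable_funD; exact: mcsqr.
    by move=> x _; rewrite -EFinD lee_fin.
  have csqr_ge0 (k : T -> R) c : 0 < c -> forall x, setT x -> (0 <= (c * k x ^+ 2)%:E)%E.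
    by move=> c_gt0 x _; rewrite lee_fin mulr_ge0 ?sqr_ge0 ?ltW.
  rewrite (@ge0_integralD _ _ _ P _ measurableT (fun x => (c1 * h1 x ^+ 2)%:E)
                                                (fun x => (c2 * h2 x ^+ 2)%:E))
    //; try exact: csqr_ge0; try exact: mcsqr.
  under eq_integral do rewrite EFinM.
  under [X in (_ + X)%E]eq_integral do rewrite EFinM.
  by rewrite !ge0_integralZl_EFin //; (exact: ltW || exact: sqr_ge0E || exact: msqr).
move: IF_le (integral_ge0 P (sqr_ge0E h1)) (integral_ge0 P (sqr_ge0E h2)).
case: (\int[P]_x (h1 x ^+ 2)%:E)%E => [I1||] //.
case: (\int[P]_x (h2 x ^+ 2)%:E)%E => [I2||] //.
rewrite -!EFinM -EFinD !lee_fin !lte_fin => IF_le I1_ge0 I2_ge0 lt1 lt2 le_e.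
apply: le_lt_trans IF_le _; rewrite lte_fin.
apply: lt_le_trans le_e; rewrite ltrD // ltr_pM2l //.
Qed.

Definition trig_approx (f : T -> R) : Prop := measurable_fun setT f /\
  forall e, 0 < e -> exists2 p, trig_poly p &
    (\int[P]_x ((f x - p x) ^+ 2)%:E < e%:E)%E.

Lemma eq_trig_approx f g : f =1 g -> trig_approx g -> trig_approx f.
Proof. by move=> /funext ->. Qed.

Lemma trig_poly_approx p : trig_poly p -> trig_approx p.
Proof.
move=> tp; split=> [|e e_gt0]; first exact: measurable_trig_poly.
exists p => //; under eq_integral do rewrite subrr expr0n.
by rewrite integral0 lte_fin.
Qed.

Lemma trig_approx_cst c : trig_approx (fun _ => c).
Proof. exact/trig_poly_approx/trig_poly_cst. Qed.

Lemma trig_approxD f g : trig_approx f -> trig_approx g -> trig_approx (f \+ g).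
Proof.
move=> [mf af] [mg ag]; split=> [|e e_gt0]; first exact: measurable_funD.
have e4_gt0 : 0 < e / 4 by rewrite divr_gt0.
have [p tp fp] := af _ e4_gt0; have [p' tp' gp'] := ag _ e4_gt0.
have mp := measurable_trig_poly tp; have mp' := measurable_trig_poly tp'.
exists (p \+ p'); first exact: trig_polyD.
apply: (integral_lt_sqr_comb (c1 := 2) (c2 := 2) _ _ _ _ _ _ _ fp gp') => //.
- by apply/measurable_funX/measurable_funB; exact: measurable_funD.
- by move=> x; exact: sqr_ge0.
- exact: measurable_funB.
- exact: measurable_funB.
- move=> x; rewrite (_ : _ - _ = (f x - p x) + (g x - p' x)) /=; last by ring.
  exact: sqrD_le.
- lra.
Qed.

Lemma trig_approxM f g M : trig_approx f -> (forall x, `|f x| <= M) ->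
  trig_approx g -> trig_approx (f \* g).
Proof.
move=> [mf af] fM [mg ag]; split=> [|e e_gt0]; first exact: measurable_funM.
have M1_gt0 : 0 < M ^+ 2 + 1 by rewrite ltr_wpDl ?sqr_ge0.
have eM_gt0 : 0 < e / (4 * (M ^+ 2 + 1)) by rewrite divr_gt0 ?mulr_gt0.
have [p tp gp] := ag _ eM_gt0.
have [K pK] := trig_poly_bounded tp.
have K1_gt0 : 0 < K ^+ 2 + 1 by rewrite ltr_wpDl ?sqr_ge0.
have eK_gt0 : 0 < e / (4 * (K ^+ 2 + 1)) by rewrite divr_gt0 ?mulr_gt0.
have [r tr fr] := af _ eK_gt0.
have mp := measurable_trig_poly tp; have mr := measurable_trig_poly tr.
exists (r \* p); first exact: trig_polyM.
apply: (integral_lt_sqr_comb (c1 := 2 * (M ^+ 2 + 1)) (c2 := 2 * (K ^+ 2 + 1))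
  _ _ _ _ _ _ _ gp fr); rewrite ?mulr_gt0 //.
- by apply/measurable_funX/measurable_funB; exact: measurable_funM.
- by move=> x; exact: sqr_ge0.
- exact: measurable_funB.
- exact: measurable_funB.
- move=> x; rewrite (_ : _ - _ = f x * (g x - p x) + p x * (f x - r x)) /=;
    last by ring.
  apply: (le_trans (sqrD_le _ _)); rewrite -!mulrA; apply: lerD; rewrite ler_pM2l //.
    by rewrite (le_trans (sqrM_le _ (fM x))) // ler_wpM2r ?sqr_ge0 ?lerDl.
  by rewrite (le_trans (sqrM_le _ (pK x))) // ler_wpM2r ?sqr_ge0 ?lerDl.
- by rewrite [leLHS](_ : _ = e) //; field; rewrite !gt_eqF.
Qed.

Lemma trig_approxZ c f : trig_approx f -> trig_approx (fun x => c * f x).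
Proof. exact: (trig_approxM (M := `|c|) (trig_approx_cst c)). Qed.

Lemma dominated_cvg_sqr_lt (f_ : nat -> T -> R) (f G : T -> R) :
  (forall n, measurable_fun setT (f_ n)) -> measurable_fun setT f ->
  measurable_fun setT G -> (\int[P]_x (G x ^+ 2)%:E < +oo)%E ->
  (forall n x, `|f_ n x| <= G x) -> (forall x, `|f x| <= G x) ->
  (forall x, f_ ^~ x @ \oo --> f x) ->
  forall e, 0 < e -> exists N, (\int[P]_x ((f_ N x - f x) ^+ 2)%:E < e%:E)%E.
Proof.
move=> mf_ mf mG iG f_G fG f_f e e_gt0.
have md n : measurable_fun setT (fun x => ((f_ n x - f x) ^+ 2)%:E).
  exact/measurable_EFinP/measurable_funX/measurable_funB.
have mG4 : measurable_fun setT (fun x => (4 * G x ^+ 2)%:E).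
  by apply/measurable_EFinP/measurable_funM/measurable_funX.
have d_cvg : {ae P, forall x, setT x ->
    (fun n => ((f_ n x - f x) ^+ 2)%:E) @ \oo --> (cst 0 x : \bar R)}.
  apply: aeW => x _; apply: cvg_EFin; first exact: nearW.
  rewrite (_ : 0 = (f x - f x) * (f x - f x)); last by rewrite subrr mul0r.
  under eq_fun do rewrite /= expr2.
  by apply: cvgM; apply: cvgB => //; exact: cvg_cst.
have G4_int : P.-integrable setT (fun x => (4 * G x ^+ 2)%:E).
  apply/integrableP; split => //.
  rewrite (eq_integral (fun x => 4%:E * (G x ^+ 2)%:E))%E; last first.
    by move=> x _; rewrite abse_EFin ger0_norm ?EFinM // mulr_ge0 ?sqr_ge0.
  rewrite ge0_integralZl_EFin //; last 2 first.
  - by move=> x _; rewrite lee_fin sqr_ge0.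
  - exact/measurable_EFinP/measurable_funX.
  by rewrite lte_mul_pinfty.
have d_G4 : {ae P, forall x n, setT x ->
    (`|((f_ n x - f x) ^+ 2)%:E| <= (4 * G x ^+ 2)%:E)%E}.
  apply: aeW => x n _; rewrite abse_EFin lee_fin ger0_norm ?sqr_ge0 //.
  exact: sqrB_le_bound.
have [_ d_int_cvg _] := dominated_convergence measurableT md
  (measurable_cst _) d_cvg G4_int d_G4.
have [N _ /(_ N (leqnn N)) /= fN_f] :=
  d_int_cvg _ (@nbhs_open_ereal_lt _ 0 (fun _ => e) e_gt0).
exists N; move: fN_f; rewrite (eq_integral (fun x => ((f_ N x - f x) ^+ 2)%:E)) //.
by move=> x _; rewrite subr0 ger0_norm ?sqr_ge0.
Qed.

Lemma trig_approx_cvg (f_ : nat -> T -> R) (f G : T -> R) :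
  (forall n, trig_approx (f_ n)) -> measurable_fun setT f ->
  measurable_fun setT G -> (\int[P]_x (G x ^+ 2)%:E < +oo)%E ->
  (forall n x, `|f_ n x| <= G x) -> (forall x, `|f x| <= G x) ->
  (forall x, f_ ^~ x @ \oo --> f x) -> trig_approx f.
Proof.
move=> af mf mG iG f_G fG f_f; split=> // e e_gt0.
have e4_gt0 : 0 < e / 4 by rewrite divr_gt0.
have mf_ n := (af n).1.
have [N fN_f] := dominated_cvg_sqr_lt mf_ mf mG iG f_G fG f_f e4_gt0.
have [p tp fN_p] := (af N).2 _ e4_gt0.
have mp := measurable_trig_poly tp.
exists p => //; apply: (integral_lt_sqr_comb (c1 := 2) (c2 := 2) _ _ _ _ _ _ _ fN_f fN_p).
- exact/measurable_funX/measurable_funB.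
- by move=> x; exact: sqr_ge0.
- exact: measurable_funB.
- exact: measurable_funB.
- by [].
- by [].
- move=> x; rewrite (_ : f x - p x = - ((f_ N x - f x) + - (f_ N x - p x)));
    last by ring.
  by rewrite sqrrN (le_trans (sqrD_le _ _)) // sqrrN.
- lra.
Qed.

End Approximation.

Section NewtonSqrt.
Variable R : realType.

(* The polynomial iteration for the square root from the proof of the Stone-Weierstrass
   theorem; it increases to [Num.sqrt t] on [0, 1]. *)
Fixpoint sqrt_iter (n : nat) (t : R) : R :=
  if n is m.+1 then sqrt_iter m t + (t - sqrt_iter m t ^+ 2) / 2 else 0.

Lemma sqrt_iter_bounds n t : 0 <= t <= 1 -> 0 <= sqrt_iter n t <= Num.sqrt t.
Proof.
move=> /andP[t_ge0 t_le1]; set s := Num.sqrt t.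
have s_ge0 : 0 <= s by rewrite sqrtr_ge0.
have s_le1 : s <= 1 by rewrite -sqrtr1 ler_sqrt.
have ts : t = s ^+ 2 by rewrite sqr_sqrtr.
elim: n => [|n /andP[p_ge0 p_les]] /=; first by rewrite lexx s_ge0.
set p := sqrt_iter n t in p_ge0 p_les *; rewrite ts.
have : 0 <= (s - p) * (1 - (s + p) / 2) by apply: mulr_ge0; lra.
have : 0 <= (s - p) * (s + p) by apply: mulr_ge0; lra.
by move=> *; apply/andP; split; nra.
Qed.

Lemma sqrt_iter_01 n t : 0 <= t <= 1 -> 0 <= sqrt_iter n t <= 1.
Proof.
move=> t01; have /andP[-> /le_trans->] // := sqrt_iter_bounds n t01.
by rewrite -sqrtr1 ler_sqrt //; case/andP: t01.
Qed.

Lemma sqrt_iter_err n t : 0 <= t <= 1 ->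
  Num.sqrt t - sqrt_iter n t <= Num.sqrt t * (1 - Num.sqrt t / 2) ^+ n.
Proof.
move=> t01; set s := Num.sqrt t.
have s_ge0 : 0 <= s by rewrite sqrtr_ge0.
have ts : t = s ^+ 2 by rewrite sqr_sqrtr //; case/andP: t01.
have s_le1 : s <= 1 by rewrite -sqrtr1 ler_sqrt //; case/andP: t01.
elim: n => [|n IHn] /=; first by rewrite expr0 mulr1 subr0.
have /andP[p_ge0 p_les] : 0 <= sqrt_iter n t <= s := sqrt_iter_bounds n t01.
set p := sqrt_iter n t in IHn p_ge0 p_les *.
have -> : s - (p + (t - p ^+ 2) / 2) = (s - p) * (1 - (s + p) / 2) by rewrite ts; ring.
have r_ge0 : 0 <= 1 - s / 2 by lra.
apply: (@le_trans _ _ ((s - p) * (1 - s / 2))); first by apply: ler_wpM2l; lra.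
by rewrite exprS mulrCA mulrC ler_wpM2l.
Qed.

Lemma sqrt_iter_cvg t : 0 <= t <= 1 -> sqrt_iter ^~ t @ \oo --> Num.sqrt t.
Proof.
move=> t01; set s := Num.sqrt t.
have s_ge0 : 0 <= s by rewrite sqrtr_ge0.
have s_le1 : s <= 1 by rewrite -sqrtr1 ler_sqrt //; case/andP: t01.
have err_cvg : (fun n => s * (1 - s / 2) ^+ n) @ \oo --> 0.
  have [s_gt0|s_le0] := ltP 0 s.
    rewrite -(mulr0 s); apply: cvgM; first exact: cvg_cst.
    by apply: cvg_expr; rewrite ger0_norm; lra.
  have -> : s = 0 by lra.
  by under eq_fun do rewrite mul0r; exact: cvg_cst.
apply: (@squeeze_cvgr _ _ _ _ (fun n => s - s * (1 - s / 2) ^+ n) (cst s)).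
- apply: nearW => n; have /andP[_ ->] := sqrt_iter_bounds n t01.
  by rewrite andbT lerBlDr addrC -lerBlDr sqrt_iter_err.
- by rewrite -[X in _ --> X]subr0; apply: cvgB => //; exact: cvg_cst.
- exact: cvg_cst.
Qed.

End NewtonSqrt.

Section Lattice.
Variables (R : realType) (Q : lmodType R) (OmR : Q -> Q -> R).
Local Notation T := (QhatM OmR).
Variable P : probability T R.
Local Notation trig_approx := (trig_approx P).

Lemma integrable_sqr_cst1 : (\int[P]_x ((cst 1 : T -> R) x ^+ 2)%:E < +oo)%E.
Proof.
under eq_integral do rewrite /= expr1n.
by rewrite integral_cst // mul1e (le_lt_trans (probability_le1 P measurableT)) ?ltry.
Qed.

Lemma trig_approx_sqrt_iter u n : trig_approx u -> (forall x, 0 <= u x <= 1) ->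
  trig_approx (fun x => sqrt_iter n (u x)).
Proof.
move=> au u01; elim: n => [|n IHn] /=; first exact: trig_approx_cst.
have p_le1 x : `|sqrt_iter n (u x)| <= 1.
  by have /andP[p_ge0 p_le1] := sqrt_iter_01 n (u01 x); rewrite ger0_norm.
apply: eq_trig_approx (trig_approxD IHn (trig_approxZ 2^-1
  (trig_approxD au (trig_approxZ (-1) (trig_approxM IHn p_le1 IHn))))) => x /=.
by rewrite expr2; ring.
Qed.

Lemma trig_approx_abs h M : trig_approx h -> (forall x, `|h x| <= M) ->
  trig_approx (fun x => `|h x|).
Proof.
move=> ah hM; set c := `|M| + 1.
have c_gt0 : 0 < c by rewrite ltr_wpDl.
pose g x := c^-1 * h x.
have g_le1 x : `|g x| <= 1.
  rewrite normrM normfV (ger0_norm (ltW c_gt0)) ler_pdivrMl // mulr1.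
  by rewrite (le_trans (hM x)) // (le_trans (ler_norm M)) // lerDl.
have ag : trig_approx g := trig_approxZ _ ah.
have ag2 : trig_approx (g \* g) := trig_approxM ag g_le1 ag.
have g2_01 x : 0 <= g x * g x <= 1.
  by rewrite -expr2 -real_normK ?num_real // sqr_ge0 /= expr_le1.
have ag_abs : trig_approx (fun x => `|g x|).
  apply: (trig_approx_cvg (f_ := fun n x => sqrt_iter n (g x * g x)) (G := cst 1))
    integrable_sqr_cst1 _ _ _ => [n|||n x|x|x].
  - exact: trig_approx_sqrt_iter.
  - by apply: (measurableT_comp (f := @Num.Def.normr _ R)) ag.1; exact: normr_measurable.
  - exact: measurable_cst.
  - by have /andP[p_ge0 p_le1] := sqrt_iter_01 n (g2_01 x); rewrite ger0_norm.
  - by rewrite normr_id.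
  - by rewrite -sqrtr_sqr expr2; exact: sqrt_iter_cvg.
apply: eq_trig_approx (trig_approxZ c ag_abs) => x.
by rewrite /g normrM normfV (ger0_norm (ltW c_gt0)) mulVKf ?gt_eqF.
Qed.

Lemma trig_approx_max f g M : trig_approx f -> trig_approx g ->
  (forall x, `|f x| <= M) -> (forall x, `|g x| <= M) ->
  trig_approx (fun x => Num.max (f x) (g x)).
Proof.
move=> af ag fM gM.
have afg : trig_approx (fun x => f x - g x).
  by apply: eq_trig_approx (trig_approxD af (trig_approxZ (-1) ag)) => x /=; rewrite mulN1r.
have fgM x : `|f x - g x| <= M + M := le_trans (ler_normB _ _) (lerD (fM x) (gM x)).
apply: eq_trig_approx (trig_approxZ 2^-1
  (trig_approxD (trig_approxD af ag) (trig_approx_abs afg fgM))) => x /=.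
by rewrite maxr_absE mulrC.
Qed.

Lemma trig_approx_min f g M : trig_approx f -> trig_approx g ->
  (forall x, `|f x| <= M) -> (forall x, `|g x| <= M) ->
  trig_approx (fun x => Num.min (f x) (g x)).
Proof.
move=> af ag fM gM.
have N_M (h : T -> R) x : `|h x| <= M -> `|-1 * h x| <= M by rewrite mulN1r normrN.
apply: eq_trig_approx (trig_approxZ (-1) (trig_approx_max (trig_approxZ (-1) af)
  (trig_approxZ (-1) ag) (fun x => N_M f x (fM x)) (fun x => N_M g x (gM x)))) => x.
by rewrite !mulN1r -real_oppr_min ?num_real ?opprK.
Qed.

End Lattice.

(* Describes the half-line [c < y] by signs of trigonometric functions of [y]: this is
   how cylinder sets are reached from the sets [0 < p], [p] a trigonometric polynomial. *)
Lemma ltr_sin_shrink (R : realType) (c y : R) :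
  c < y <-> exists m, forall n, 0 < sin ((m + n).+1%:R^-1 * (y - c)).
Proof.
have trunc_lt (d : R) k : (Num.truncn (d / pi) <= k)%N -> k.+1%:R^-1 * d < pi.
  move=> dk; rewrite ltr_pdivrMl // -ltr_pdivrMr ?pi_gt0 //.
  by rewrite (lt_le_trans (truncnS_gt _)) // ler_nat ltnS.
split=> [cy|[m sin_gt0]].
  exists (Num.truncn ((y - c) / pi)) => n; apply: sin_gt0_pi.
  by rewrite mulr_gt0 ?invr_gt0 ?subr_gt0 // trunc_lt // leq_addr.
rewrite ltNge; apply/negP => yc; have := sin_gt0 (Num.truncn ((c - y) / pi)).
rewrite -(opprB c y) mulrN sinN oppr_gt0 ltNge sin_ge0_pi //.
by rewrite mulr_ge0 ?invr_ge0 ?subr_ge0 // ltW // trunc_lt // leq_addl.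
Qed.

Section ApproximableSets.
Variables (R : realType) (Q : lmodType R) (OmR : Q -> Q -> R).
Local Notation T := (QhatM OmR).
Variable P : probability T R.
Local Notation trig_approx := (trig_approx P).

Definition trig_approx_set (A : set T) : Prop :=
  measurable A /\ trig_approx (\1_A : T -> R).

Lemma indic_norm_le1 (A : set T) x : `|(\1_A : T -> R) x| <= 1.
Proof. by rewrite indicE; case: (x \in A); rewrite ?normr1 ?normr0. Qed.

Lemma trig_approx_setT : trig_approx_set setT.
Proof.
split => //; apply: eq_trig_approx (trig_approx_cst P 1) => x.
by rewrite indicE mem_set.
Qed.

Lemma trig_approx_setC A : trig_approx_set A -> trig_approx_set (~` A).
Proof.
move=> [mA aA]; split; first exact: measurableC.
apply: eq_trig_approx (trig_approxD (trig_approx_cst P 1) (trig_approxZ (-1) aA)) => x.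
by rewrite /= !indicE in_setC; case: (x \in A) => /=; ring.
Qed.

Lemma trig_approx_setI A B :
  trig_approx_set A -> trig_approx_set B -> trig_approx_set (A `&` B).
Proof.
move=> [mA aA] [mB aB]; split; first exact: measurableI.
by rewrite indicI; exact: trig_approxM aA (indic_norm_le1 A) aB.
Qed.

Lemma trig_approx_setU A B :
  trig_approx_set A -> trig_approx_set B -> trig_approx_set (A `|` B).
Proof.
move=> aA aB; rewrite -[A `|` B]setCK setCU.
by apply/trig_approx_setC/trig_approx_setI; exact: trig_approx_setC.
Qed.

Lemma trig_approx_bigcup (F : nat -> set T) :
  (forall n, trig_approx_set (F n)) -> trig_approx_set (\bigcup_n F n).
Proof.
move=> aF; pose U n := \big[setU/set0]_(i < n) F i.
have aU n : trig_approx_set (U n).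
  elim: n => [|n IHn]; rewrite /U ?big_ord0 ?big_ord_recr /=.
    by rewrite -setCT; exact/trig_approx_setC/trig_approx_setT.
  exact: trig_approx_setU.
have mF : measurable (\bigcup_n F n) by apply: bigcupT_measurable => n; exact: (aF n).1.
split => //; apply: (trig_approx_cvg (f_ := fun n => \1_(U n)) (G := cst 1))
  (integrable_sqr_cst1 P) _ _ _ => [n|||n x|x|x].
- exact: (aU n).2.
- exact/measurable_indicP.
- exact: measurable_cst.
- exact: indic_norm_le1.
- exact: indic_norm_le1.
apply: cvg_near_cst; have [[k _ Fk]|nF] := pselect ((\bigcup_n F n) x).
  near=> n; have kn : (k < n)%N by near: n; exact: nbhs_infty_gt.
  rewrite !indicE (@mem_set _ _ x) ?(@mem_set _ _ x) //; first by exists k.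
  by rewrite /U -bigcup_mkord; exists k.
near=> n; rewrite !indicE !memNset // /U -bigcup_mkord => -[i _ Fi].
by apply: nF; exists i.
Unshelve. all: by end_near.
Qed.

Lemma trig_approx_set_sigma : sigma_algebra setT trig_approx_set.
Proof.
split=> [|A aA|]; last exact: trig_approx_bigcup.
  by rewrite -setCT; exact/trig_approx_setC/trig_approx_setT.
by rewrite setTD; exact: trig_approx_setC.
Qed.

Lemma trig_approx_set_gt0 t : trig_poly t -> trig_approx_set [set x | 0 < t x].
Proof.
move=> tp; have mt := measurable_trig_poly tp.
have mpos : measurable [set x | 0 < t x].
  have := mt measurableT _ (measurable_itv `]0, +oo[).
  by rewrite setTI; congr measurable; apply/seteqP; split => x /=;
    rewrite in_itv /= andbT.
split => //; have [K tK] := trig_poly_bounded tp.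
have at_ := trig_poly_approx P tp.
have pos_le x : `|Num.max (t x) 0| <= `|K|.
  exact: le_trans (normr_max0_le _) (le_trans (tK x) (ler_norm K)).
have apos : trig_approx (fun x => Num.max (t x) 0).
  apply: (trig_approx_max (M := `|K|)) at_ (trig_approx_cst P 0) _ _ => x.
    by rewrite (le_trans (tK x)) ?ler_norm.
  by rewrite normr0.
(* [w k] increases to the indicator of [0 < t]. *)
pose w (k : nat) x := Num.min 1 (k%:R * Num.max (t x) 0).
have aw k : trig_approx (w k).
  apply: (trig_approx_min (M := 1 + k%:R * `|K|))
    (trig_approx_cst P 1) (trig_approxZ _ apos) _ _ => x.
    by rewrite normr1 lerDl mulr_ge0.
  by rewrite normrM ger0_norm // (le_trans (ler_wpM2l _ (pos_le x))) ?lerDr.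
apply: (trig_approx_cvg (f_ := w) (G := cst 1)) (integrable_sqr_cst1 P) _ _ _ => [k|||k x|x|x].
- exact: aw.
- exact/measurable_indicP.
- exact: measurable_cst.
- rewrite ger0_norm ?ge_min ?lexx // le_min ler01 mulr_ge0 //.
  by rewrite le_max lexx orbT.
- exact: indic_norm_le1.
apply: cvg_near_cst; have [tx_le0|tx_gt0] := leP (t x) 0.
  near=> k; rewrite /w (max_idPr tx_le0) mulr0 (min_idPr ler01) indicE memNset //=.
  by rewrite ltNge tx_le0.
near=> k; have k_gt : (t x)^-1 < k%:R by near: k; exact: nbhs_infty_gtr.
rewrite /w (max_idPl (ltW tx_gt0)) min_l; first by rewrite indicE mem_set.
by rewrite -ler_pdivrMr // div1r ltW.
Unshelve. all: by end_near.
Qed.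

Lemma trig_approx_set_qh_gt l c : is_Qstar OmR l ->
  trig_approx_set [set x | c < qh x l].
Proof.
move=> Ql; pose k n := n.+1%:R^-1 : R.
pose S n := [set x : T | 0 < sin (qh x (fun phi => k n * l phi) - k n * c)].
have -> : [set x | c < qh x l] = \bigcup_m ~` \bigcup_n ~` S (m + n)%N.
  have SE n x : S n x = (0 < sin (k n * (qh x l - c))) by rewrite /S /= qhZ // mulrBr.
  apply/seteqP; split=> x /=.
    move=> /ltr_sin_shrink[m sin_gt0]; exists m => // -[n _ /=].
    by move=> nS; apply: nS; rewrite SE; exact: sin_gt0.
  move=> [m _ /= S_m]; apply/ltr_sin_shrink; exists m => n.
  by apply: contrapT; rewrite -SE => nS; apply: S_m; exists n.
apply: trig_approx_bigcup => m; apply/trig_approx_setC/trig_approx_bigcup => n.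
by apply/trig_approx_setC/trig_approx_set_gt0/trig_poly_sinB; exact: is_QstarZ.
Qed.

Lemma trig_approx_set_preimage l B : is_Qstar OmR l -> measurable B ->
  trig_approx_set ((fun x : T => qh x l) @^-1` B).
Proof.
move=> Ql mB; pose E B := trig_approx_set ((fun x : T => qh x l) @^-1` B).
have sigmaE : sigma_algebra setT E.
  split=> [|A EA|F EF]; rewrite /E.
  - by rewrite preimage_set0 -setCT; exact/trig_approx_setC/trig_approx_setT.
  - by rewrite setTD -preimage_setC; exact: trig_approx_setC.
  - by rewrite preimage_bigcup; exact: trig_approx_bigcup.
have GE : RGenOInfty.G (R := R) `<=` E.
  move=> _ [c ->]; rewrite /E (_ : _ @^-1` _ = [set x | c < qh x l]).
    exact: trig_approx_set_qh_gt.
  by apply/seteqP; split=> x /=; rewrite in_itv /= andbT.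
have mGB : (RGenOInfty.G (R := R)).-sigma.-measurable B.
  by rewrite -(RGenOInfty.measurableE R).
exact: smallest_sub sigmaE GE _ mGB.
Qed.

Lemma trig_approx_set_measurable A : measurable A -> trig_approx_set A.
Proof.
apply: (smallest_sub trig_approx_set_sigma) => _ [l [Ql [B [mB ->]]]].
exact: trig_approx_set_preimage.
Qed.

End ApproximableSets.

Section Density.
Variables (R : realType) (Q : lmodType R) (OmR : Q -> Q -> R).
Local Notation T := (QhatM OmR).
Variable P : probability T R.
Local Notation trig_approx := (trig_approx P).

Lemma trig_approx_sum n (F : 'I_n -> T -> R) : (forall i, trig_approx (F i)) ->
  trig_approx (fun x => \sum_(i < n) F i x).
Proof.
elim: n F => [|n IHn] F aF.
  by apply: eq_trig_approx (trig_approx_cst P 0) => x; rewrite big_ord0.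
apply: eq_trig_approx (trig_approxD (IHn _ (fun i => aF (widen_ord (leqnSn n) i)))
  (aF ord_max)) => x.
by rewrite big_ord_recr.
Qed.

Lemma trig_approx_nnsfun (s : {nnsfun T >-> R}) : trig_approx s.
Proof.
apply: eq_trig_approx (fimfunEord s) _.
apply: trig_approx_sum => i; apply: trig_approxZ.
apply: (trig_approx_set_measurable P _).2.
by rewrite -[X in measurable X]setTI; exact: (measurable_funP s).
Qed.

Lemma trig_approx_ge0 (g : T -> R) : measurable_fun setT g -> (forall x, 0 <= g x) ->
  (\int[P]_x (g x ^+ 2)%:E < +oo)%E -> trig_approx g.
Proof.
move=> mg g_ge0 ig.
have mEg : measurable_fun setT (EFin \o g) by exact/measurable_EFinP.
have Eg_ge0 x : setT x -> (0 <= (EFin \o g) x)%E by rewrite lee_fin.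
pose s := nnsfun_approx measurableT mEg.
have s_cvg x : (fun n => s n x) @ \oo --> g x.
  exact: fine_cvg (cvg_nnsfun_approx measurableT mEg Eg_ge0 (I : setT x)).
have s_nd x : {homo (fun n => s n x) : n m / (n <= m)%N >-> n <= m}.
  by move=> m n mn; have /lefP := nd_nnsfun_approx measurableT mEg mn; apply.
have s_le n x : s n x <= g x.
  have := nondecreasing_cvgn_le (s_nd x) (cvgP _ (s_cvg x)) n.
  by rewrite (cvg_lim _ (s_cvg x)).
apply: (trig_approx_cvg (f_ := fun n => s n) (G := g)) => // [n|n x|x].
- exact: trig_approx_nnsfun.
- by rewrite ger0_norm.
- by rewrite ger0_norm.
Qed.

Lemma integral_sqr_le (h g : T -> R) : measurable_fun setT h -> measurable_fun setT g ->
  (forall x, `|h x| <= `|g x|) ->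
  (\int[P]_x (h x ^+ 2)%:E <= \int[P]_x (g x ^+ 2)%:E)%E.
Proof.
move=> mh mg hg; apply: ge0_le_integral => //.
- by move=> x _; rewrite lee_fin sqr_ge0.
- exact/measurable_EFinP/measurable_funX.
- exact/measurable_EFinP/measurable_funX.
by move=> x _; rewrite lee_fin -[h x ^+ 2]real_normK ?num_real // -[g x ^+ 2]real_normK
  ?num_real // ler_sqr ?nnegrE.
Qed.

Lemma trig_approx_L2 (g : T -> R) : measurable_fun setT g ->
  (\int[P]_x (g x ^+ 2)%:E < +oo)%E -> trig_approx g.
Proof.
move=> mg ig; pose gp x := Num.max (g x) 0; pose gn x := Num.max (- g x) 0.
have mgp : measurable_fun setT gp by apply: measurable_maxr => //; exact: measurable_cst.
have mgn : measurable_fun setT gn.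
  by apply: measurable_maxr; [exact: measurableT_comp | exact: measurable_cst].
have agp : trig_approx gp.
  apply: trig_approx_ge0 => // [x|]; first by rewrite le_max lexx orbT.
  by apply: le_lt_trans ig; apply: integral_sqr_le => // x; exact: normr_max0_le.
have agn : trig_approx gn.
  apply: trig_approx_ge0 => // [x|]; first by rewrite le_max lexx orbT.
  apply: le_lt_trans ig; apply: integral_sqr_le => // x.
  by rewrite -[`|g x|]normrN; exact: normr_max0_le.
apply: eq_trig_approx (trig_approxD agp (trig_approxZ (-1) agn)) => x /=.
rewrite /gp /gn mulN1r; have [g_ge0|g_lt0] := leP 0 (g x).
  by rewrite (max_idPr _) ?subr0 // oppr_le0.
by rewrite (max_idPl _) ?add0r ?opprK // oppr_ge0 ltW.
Qed.

Lemma trig_poly_dense_L2 (fr fi : T -> R) :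
  measurable_fun setT fr -> measurable_fun setT fi ->
  (\int[P]_x (fr x ^+ 2 + fi x ^+ 2)%:E < +oo)%E -> forall e, 0 < e ->
  exists pr, exists2 pi, trig_poly pr /\ trig_poly pi &
    (\int[P]_x ((fr x - pr x) ^+ 2 + (fi x - pi x) ^+ 2)%:E < e%:E)%E.
Proof.
move=> mfr mfi ifri e e_gt0.
have mfri : measurable_fun setT (fun x => fr x ^+ 2 + fi x ^+ 2).
  by apply: measurable_funD; exact: measurable_funX.
have sqr_le_sum (u v : R) : u ^+ 2 <= u ^+ 2 + v ^+ 2 by rewrite lerDl sqr_ge0.
have int_le (f : T -> R) : measurable_fun setT f ->
    (forall x, f x ^+ 2 <= fr x ^+ 2 + fi x ^+ 2) ->
    (\int[P]_x (f x ^+ 2)%:E < +oo)%E.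
  move=> mf f_le; apply: le_lt_trans ifri; apply: ge0_le_integral => //.
  - by move=> x _; rewrite lee_fin sqr_ge0.
  - exact/measurable_EFinP/measurable_funX.
  - exact/measurable_EFinP.
  - by move=> x _; rewrite lee_fin.
have [_ afr] := trig_approx_L2 mfr (int_le _ mfr (fun x => sqr_le_sum _ _)).
have [_ afi] : trig_approx fi.
  by apply: trig_approx_L2 (int_le _ mfi _) => // x; rewrite addrC sqr_le_sum.
have e2_gt0 : 0 < e / 2 by rewrite divr_gt0.
have [pr tpr fr_pr] := afr _ e2_gt0; have [pi tpi fi_pi] := afi _ e2_gt0.
have mpr := measurable_trig_poly tpr; have mpi := measurable_trig_poly tpi.
exists pr, pi => //.
apply: (integral_lt_sqr_comb (c1 := 1) (c2 := 1) _ _ _ _ _ _ _ fr_pr fi_pi) => //.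
- by apply: measurable_funD; apply/measurable_funX/measurable_funB.
- by move=> x; rewrite addr_ge0 ?sqr_ge0.
- exact: measurable_funB.
- exact: measurable_funB.
- by move=> x; rewrite !mul1r.
- lra.
Qed.

End Density.

Section SpanOfCoherentStates.
Variables (R : realType) (L Q : lmodType R).
Variables (br : L -> L -> R) (q : L -> Q) (bQ : L -> Q -> R) (OmR OmI : Q -> Q -> R).
Local Notation T := (QhatM OmR).
Local Notation kre := (kS_re br q bQ OmR OmI).
Local Notation kim := (kS_im br q bQ OmR OmI).

Definition in_kS_span (fr fi : T -> R) : Prop :=
  exists n (tau : 'I_n -> L) (a b : 'I_n -> R), forall x,
    span_re br q bQ OmR OmI tau a b x = fr x /\ span_im br q bQ OmR OmI tau a b x = fi x.

Lemma eq_in_kS_span fr fi gr gi : fr =1 gr -> fi =1 gi ->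
  in_kS_span gr gi -> in_kS_span fr fi.
Proof. by move=> /funext-> /funext->. Qed.

Lemma in_kS_span1 tau a b : in_kS_span (fun x => a * kre tau x - b * kim tau x)
                                       (fun x => a * kim tau x + b * kre tau x).
Proof.
by exists 1%N, (fun=> tau), (fun=> a), (fun=> b) => x; rewrite /span_re /span_im !big_ord1.
Qed.

Lemma in_kS_span0 : in_kS_span (fun _ => 0) (fun _ => 0).
Proof.
by exists 0%N, (fun=> 0), (fun=> 0), (fun=> 0) => x; rewrite /span_re /span_im !big_ord0.
Qed.

Lemma in_kS_spanD fr fi gr gi : in_kS_span fr fi -> in_kS_span gr gi ->
  in_kS_span (fr \+ gr) (fi \+ gi).
Proof.
move=> [m [tau [a [b f_span]]]] [n [tau' [a' [b' g_span]]]].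
pose cat (U : Type) (u : 'I_m -> U) (u' : 'I_n -> U) (i : 'I_(m + n)) :=
  match fintype.split i with inl j => u j | inr k => u' k end.
have catl U u u' j : @cat U u u' (lshift n j) = u j by rewrite /cat (unsplitK (inl _)).
have catr U u u' k : @cat U u u' (rshift m k) = u' k by rewrite /cat (unsplitK (inr _)).
exists (m + n)%N, (cat _ tau tau'), (cat _ a a'), (cat _ b b') => x.
have [fr_x fi_x] := f_span x; have [gr_x gi_x] := g_span x.
rewrite /span_re /span_im !big_split_ord /=.
by rewrite -fr_x -fi_x -gr_x -gi_x /span_re /span_im; split;
  congr (_ + _); apply: eq_bigr => i _; rewrite ?catl ?catr.
Qed.

Lemma in_kS_spanI fr fi : in_kS_span fr fi -> in_kS_span (fun x => - fi x) fr.
Proof.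
move=> [n [tau [a [b f_span]]]]; exists n, tau, (fun i => - b i), a => x.
have [<- <-] := f_span x; rewrite /span_re /span_im -sumrN.
by split; apply: eq_bigr => i _; ring.
Qed.

Hypothesis kS_character : forall l, is_Qstar OmR l ->
  exists tau, forall x, kre tau x = cos (qh x l) /\ kim tau x = sin (qh x l).

Lemma in_kS_span_trig_term t : is_Qstar OmR t.1 -> in_kS_span (trig_term t) (fun _ => 0).
Proof.
(* [a cos + b sin] is the average of [(a - ib) e^{i x(l)}] and its conjugate
   [(a + ib) e^{-i x(l)}]. *)
case: t => l [a b] /= Ql.
have [tau k_tau] := kS_character Ql; have [tau' k_tau'] := kS_character (is_QstarZ (-1) Ql).
apply: eq_in_kS_span (in_kS_spanD (in_kS_span1 tau (a / 2) (- (b / 2)))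
                                  (in_kS_span1 tau' (a / 2) (b / 2))) => x /=;
  have [-> ->] := k_tau x; have [-> ->] := k_tau' x;
  rewrite qhZ // mulN1r cosN sinN /trig_term /=; by field.
Qed.

Lemma in_kS_span_trig_poly pr pi : trig_poly pr -> trig_poly pi -> in_kS_span pr pi.
Proof.
have real_part s : List.Forall (fun t => is_Qstar OmR t.1) s ->
    in_kS_span (trig_sum s) (fun _ => 0).
  elim: s => [_|t s IHs /List.Forall_cons_iff [Qt Qs]].
    by apply: eq_in_kS_span in_kS_span0 => x //; rewrite /trig_sum big_nil.
  apply: eq_in_kS_span (in_kS_spanD (in_kS_span_trig_term Qt) (IHs Qs)) => x /=.
    by rewrite /trig_sum big_cons.
  by rewrite addr0.
move=> [s Qs pr_s] [s' Qs' pi_s'].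
apply: eq_in_kS_span (in_kS_spanD (real_part s Qs) (in_kS_spanI (real_part s' Qs'))) => x /=.
  by rewrite pr_s oppr0 addr0.
by rewrite pi_s' add0r.
Qed.

End SpanOfCoherentStates.

Lemma bilinear_form0l (R : realType) (V : lmodType R) (B : V -> V -> R) :
  bilinear_form B -> forall z, B 0 z = 0.
Proof.
move=> [B_lin _] z; have := B_lin 1 0 0 z.
by rewrite scale1r addr0 mul1r => /eqP; rewrite -subr_eq subrr eq_sym => /eqP.
Qed.

Section CoherentStatesOnM.
Variables (R : realType) (L Q : lmodType R).
Variables (br : L -> L -> R) (q : L -> Q) (bQ : L -> Q -> R) (OmR OmI : Q -> Q -> R).
Hypotheses (br_bil : bilinear_form br)
  (OmR_bil : bilinear_form OmR) (OmI_bil : bilinear_form OmI)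
  (LMN : forall xi : L, exists m n, (forall x, br x m = 0) /\ (forall x, br n x = 0)
                               /\ xi = m + n)
  (q_surj : forall phi : Q, exists xi, q xi = phi)
  (q_ker : forall xi, q xi = 0 <-> (forall x, br x xi = 0))
  (bQ_q : forall xi tau, bQ xi (q tau) = br xi tau)
  (Qstar_rep : forall l, is_Qstar OmR l -> exists xi, forall phi, l phi = bQ xi phi).

Lemma exists_kS_character l : is_Qstar OmR l -> exists tau, forall x,
  kS_re br q bQ OmR OmI tau x = cos (qh x l) /\ kS_im br q bQ OmR OmI tau x = sin (qh x l).
Proof.
move=> Ql; have [xi l_xi] := Qstar_rep Ql.
have [m [n [m_M [n_N xi_mn]]]] := LMN xi; rewrite {}xi_mn in l_xi.
have qm0 : q m = 0 by apply/q_ker.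
have re0 : (fun phi => OmR (q m) phi) = (fun _ => 0).
  by apply/funext => phi; rewrite qm0 (bilinear_form0l OmR_bil).
have im_l : (fun phi => OmI (q m) phi + bQ m phi) = l.
  apply/funext => phi; have [t <-] := q_surj phi.
  rewrite qm0 (bilinear_form0l OmI_bil) add0r l_xi !bQ_q.
  by have := br_bil.1 1 m n t; rewrite scale1r mul1r n_N addr0.
exists m => x; rewrite /kS_re /kS_im /kS_arg_re /kS_arg_im re0 im_l qh0 qm0.
by rewrite (bilinear_form0l OmR_bil) (bilinear_form0l OmI_bil) m_M !mul0r !subr0 expR0 !mul1r.
Qed.

End CoherentStatesOnM.

Theorem proposition3p4
  (R : realType) (L Q : lmodType R)
  (br : L -> L -> R) (q : L -> Q) (bQ : L -> Q -> R)
  (OmR OmI : Q -> Q -> R)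
  (P : probability (QhatM OmR) R)
  (br_bil : bilinear_form br)
  (omega_nondeg : forall xi, (forall xi', br xi xi' / 2 - br xi' xi / 2 = 0) -> xi = 0)
  (LMN : forall xi : L, exists m n, (forall x, br x m = 0) /\ (forall x, br n x = 0)
                               /\ xi = m + n)
  (MN0 : forall t : L, (forall x, br x t = 0) -> (forall x, br t x = 0) -> t = 0)
  (q_lin : forall a x y, q (a *: x + y) = a *: q x + q y)
  (q_surj : forall phi : Q, exists xi, q xi = phi)
  (q_ker : forall xi, q xi = 0 <-> (forall x, br x xi = 0))
  (bQ_q : forall xi tau, bQ xi (q tau) = br xi tau)
  (OmR_bil : bilinear_form OmR) (OmI_bil : bilinear_form OmI)
  (OmR_sym : forall phi psi, OmR phi psi = OmR psi phi)
  (OmI_sym : forall phi psi, OmI phi psi = OmI psi phi)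
  (OmR_pos : forall phi, phi != 0 -> 0 < OmR phi phi)
  (Q_cpl : Q_complete OmR) (Q_sep : Q_separable OmR)
  (OmI_cont : Qcont2 OmR OmI)
  (bQ_cont : forall xi, Qcont OmR (bQ xi))
  (Qstar_rep : forall l, is_Qstar OmR l -> exists xi, forall phi, l phi = bQ xi phi)
  (P_char : forall l, is_Qstar OmR l ->
     (\int[P]_x (cos (qh x l))%:E = (expR (- (dual_norm OmR l ^+ 2) / 4))%:E)%E /\
     (\int[P]_x (sin (qh x l))%:E = 0)%E) :
  forall (fr fi : QhatM OmR -> R),
    measurable_fun setT fr -> measurable_fun setT fi ->
    (\int[P]_x ((fr x) ^+ 2 + (fi x) ^+ 2)%:E < +oo)%E ->
    forall e : R, 0 < e ->
    exists n (tau : 'I_n -> L) (a b : 'I_n -> R),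
      (\int[P]_x ((fr x - span_re br q bQ OmR OmI tau a b x) ^+ 2
                + (fi x - span_im br q bQ OmR OmI tau a b x) ^+ 2)%:E < e%:E)%E.
Proof.
move=> fr fi mfr mfi ifri e e_gt0.
have [pr [pi [tpr tpi] close]] := trig_poly_dense_L2 mfr mfi ifri e_gt0.
have kS_character :=
  exists_kS_character br_bil OmR_bil OmI_bil LMN q_surj q_ker bQ_q Qstar_rep.
have [n [tau [a [b span]]]] := in_kS_span_trig_poly kS_character tpr tpi.
exists n, tau, a, b.
by under eq_integral do rewrite (span _).1 (span _).2.
Qed.
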